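(* For every positive integer $n$, \[ \sum_{i=1}^{n}2^{\omega(i)}=\sum_{1\leq i^{2}\leq n}\mu(i)\,D_{2}\!\left(\left\lfloor\frac{n}{i^{2}}\right\rfloor\right)=2n-1+2\sum_{1<i^{2}<n}\left(\varphi\!\left(\left\lfloor\frac{n}{i}\right\rfloor,i\right)-\varphi(i)\right), \] where the sums on the right run over positive integers $i$ satisfying the indicated conditions.
   Context: $\omega(i)$ is the number of distinct prime divisors of $i$; $\mu$ is the Möbius function; $D_{2}(m)$ is the number of ordered pairs $(a,b)$ of positive integers with $ab\leq m$ (equivalently $D_{2}(m)=\sum_{j\leq m}\tau(j)$ with $\tau$ the number-of-divisors function); for real $x$ and positive integer $a$, $\varphi(x,a)$ is the number of positive integers not exceeding $x$ that are relatively prime to $a$, and $\varphi(a)=\varphi(a,a)$ is Euler's totient function. *)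

From mathcomp Require Import all_boot all_order all_algebra.
Set Implicit Arguments. Unset Strict Implicit. Unset Printing Implicit Defensive.
Import GRing.Theory Num.Theory.

Definition omega (n : nat) : nat := size (primes n).

(* Moebius function (as an integer): for n >= 1,
   mu n = (-1)^omega(n) if n is squarefree, 0 otherwise.  (mu 0 := 0.) *)
Definition squarefree (n : nat) : bool :=
  (0 < n) && all (fun p => logn p n == 1) (primes n).
Definition mobius (n : nat) : int :=
  if squarefree n then ((-1) ^+ omega n)%R else 0%R.

Definition D2 (m : nat) : nat :=
  \sum_(1 <= a < m.+1) \sum_(1 <= b < m.+1) (a * b <= m).

Definition phi2 (m a : nat) : nat := \sum_(1 <= k < m.+1) coprime k a.

From mathcomp Require Import all_boot all_order all_algebra.
From mathcomp Require Import zify.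
Set Implicit Arguments.
Unset Strict Implicit.
Unset Printing Implicit Defensive.
Import GRing.Theory.

(* All three expressions count the coprime pairs (a, b) of positive integers
   with a b <= n: an integer i has exactly 2^omega(i) factorisations i = a b
   with a, b coprime (its unitary divisors).  Detecting coprimality by
   sum_(d | gcd(a,b)) mu(d) and writing a = d a', b = d b' gives the Moebius
   formula, since a' b' <= n / d^2.  Alternatively, by symmetry the pairs are
   (1, 1) and twice those with a < b; for fixed a these b are the integers in
   (a, n/a] coprime to a, counted by phi(n/a, a) - phi(a), and there are none
   unless a^2 < n. *)

Lemma coprime_ind (P : nat -> Prop) :
  P 1 -> (forall p k, prime p -> 0 < k -> P (p ^ k)) ->
  (forall m n, coprime m n -> 0 < m -> 0 < n -> P m -> P n -> P (m * n)) ->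
  forall n, 0 < n -> P n.
Proof.
move=> P1 Ppexp PM; elim/ltn_ind=> n IHn n_gt0.
have [n_le1 | n_gt1] := leqP n 1.
  by case: n {IHn} n_gt0 n_le1 => [|[]].
have p_n : pdiv n \in primes n by rewrite mem_primes pdiv_prime // n_gt0 pdiv_dvd.
move: (pdiv n) (pdiv_prime n_gt1) p_n => p p_pr p_n; rewrite -(partnC p n_gt0).
apply: PM; rewrite ?part_gt0 ?coprime_partC //.
  by rewrite p_part; apply: Ppexp; rewrite ?logn_gt0.
apply: IHn (part_gt0 _ _).
by rewrite -{2}(partnC p n_gt0) ltn_Pmull ?part_gt0 ?p_part_gt1.
Qed.

Section CoprimeDivisors.

Variables m n : nat.
Hypotheses (m_gt0 : 0 < m) (n_gt0 : 0 < n) (co_mn : coprime m n).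

Lemma gcdn_mul_dvdl a b : a %| m -> b %| n -> gcdn (a * b) m = a.
Proof.
move=> dv_am dv_bn; rewrite gcdnC Gauss_gcdl; first exact/gcdn_idPr.
by rewrite coprime_sym (coprime_dvdl dv_bn) // coprime_sym.
Qed.

Lemma gcdn_mul_dvdr a b : a %| m -> b %| n -> gcdn (a * b) n = b.
Proof.
move=> dv_am dv_bn; rewrite gcdnC Gauss_gcdr; first exact/gcdn_idPr.
by rewrite coprime_sym (coprime_dvdl dv_am).
Qed.

Lemma dvdn_coprime_mul_gcd d : d %| m * n -> d = gcdn d m * gcdn d n.
Proof.
move=> dv_d_mn; have co_g : coprime (gcdn d m) (gcdn d n).
  exact: coprime_dvdl (dvdn_gcdr _ _) (coprime_dvdr (dvdn_gcdr _ _) co_mn).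
apply/eqP; rewrite eqn_dvd (Gauss_dvd _ co_g) !dvdn_gcdl andbT.
by rewrite muln_gcdl dvdn_gcd dvdn_mulr //= andbT muln_gcdr dvdn_gcd dvdn_mull.
Qed.

Lemma divisorsM :
  perm_eq (divisors (m * n)) [seq a * b | a <- divisors m, b <- divisors n].
Proof.
apply: uniq_perm; rewrite ?divisors_uniq //.
  apply: allpairs_uniq; rewrite ?divisors_uniq //.
  move=> _ _ /allpairsP[[a b] /= [a_m b_n ->]] /allpairsP[[a' b'] /= [a_m' b_n' ->]].
  rewrite -!dvdn_divisors // in a_m b_n a_m' b_n' * => /= eq_ab.
  by congr pair; [rewrite -(gcdn_mul_dvdl a_m b_n) eq_ab gcdn_mul_dvdl
                 |rewrite -(gcdn_mul_dvdr a_m b_n) eq_ab gcdn_mul_dvdr].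
move=> d; rewrite -dvdn_divisors ?muln_gt0 ?m_gt0 //; apply/idP/allpairsP.
  move=> dv_d_mn; exists (gcdn d m, gcdn d n).
  by rewrite -!dvdn_divisors // !dvdn_gcdr -dvdn_coprime_mul_gcd.
by case=> -[a b] /= [a_m b_n ->]; rewrite dvdn_mul // dvdn_divisors.
Qed.

Lemma big_divisorsM R (idx : R) (op : Monoid.com_law idx) (F : nat -> R) :
  \big[op/idx]_(d <- divisors (m * n)) F d =
  \big[op/idx]_(a <- divisors m) \big[op/idx]_(b <- divisors n) F (a * b).
Proof. by rewrite (perm_big _ divisorsM) big_allpairs_dep. Qed.

End CoprimeDivisors.

Lemma divisors_pexp p k : prime p ->
  perm_eq (divisors (p ^ k)) [seq p ^ j | j <- iota 0 k.+1].
Proof.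
move=> p_pr; apply: uniq_perm; rewrite ?divisors_uniq //.
  rewrite map_inj_uniq ?iota_uniq // => i j /eqP.
  by rewrite eqn_exp2l ?prime_gt1 // => /eqP.
move=> d; rewrite -dvdn_divisors ?expn_gt0 ?prime_gt0 //.
apply/(dvdn_pfactor _ _ p_pr)/mapP => -[j].
  by move=> le_jk ->; exists j; rewrite // mem_iota ltnS.
by rewrite mem_iota ltnS => /andP[_ le_jk] ->; exists j.
Qed.

Lemma big_divisors_pexp R (idx : R) (op : Monoid.com_law idx) (F : nat -> R) p k :
  prime p ->
  \big[op/idx]_(d <- divisors (p ^ k)) F d = \big[op/idx]_(0 <= j < k.+1) F (p ^ j).
Proof. by move=> p_pr; rewrite (perm_big _ (divisors_pexp k p_pr)) big_map. Qed.

Section CoprimeArithmetic.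

Variables m n : nat.
Hypotheses (m_gt0 : 0 < m) (n_gt0 : 0 < n) (co_mn : coprime m n).

Lemma primesM_coprime : perm_eq (primes (m * n)) (primes m ++ primes n).
Proof.
apply: uniq_perm => [||p]; rewrite ?primes_uniq ?mem_cat ?primesM //.
by rewrite cat_uniq !primes_uniq andbT -coprime_has_primes.
Qed.

Lemma omegaM : omega (m * n) = omega m + omega n.
Proof. by rewrite /omega (perm_size primesM_coprime) size_cat. Qed.

Lemma squarefreeM : squarefree (m * n) = squarefree m && squarefree n.
Proof.
rewrite /squarefree muln_gt0 m_gt0 n_gt0 (perm_all _ primesM_coprime) all_cat /=.
congr andb; apply: eq_in_all => p; rewrite mem_primes => /and3P[_ _ dv_p].
  by rewrite mulnC logn_Gauss // coprime_sym (coprime_dvdr dv_p) // coprime_sym.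
by rewrite logn_Gauss // (coprime_dvdl dv_p) // coprime_sym.
Qed.

Lemma mobiusM : mobius (m * n) = (mobius m * mobius n)%R.
Proof.
rewrite /mobius squarefreeM omegaM exprD.
by case: (squarefree m); case: (squarefree n); rewrite ?mulr0 ?mul0r.
Qed.

End CoprimeArithmetic.

Lemma omega_pexp p k : prime p -> 0 < k -> omega (p ^ k) = 1.
Proof. by move=> p_pr k_gt0; rewrite /omega primesX // primes_prime. Qed.

Lemma mobius_pexp p j : prime p ->
  mobius (p ^ j) = if j == 0 then 1%R else if j == 1 then (-1)%R else 0%R.
Proof.
move=> p_pr; case: j => [|j]; first by rewrite expn0.
rewrite /mobius /squarefree expn_gt0 prime_gt0 // primesX // primes_prime //=.
by rewrite pfactorK // andbT omega_pexp.
Qed.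

Lemma sum_mobius_divisors n : 0 < n ->
  (\sum_(d <- divisors n) mobius d = (n == 1)%N%:Z)%R.
Proof.
move: n; apply: coprime_ind => [|p k p_pr k_gt0|m n co_mn m_gt0 n_gt0 IHm IHn].
- by rewrite (_ : divisors 1 = [:: 1]) // big_seq1.
- rewrite big_divisors_pexp // big_ltn // big_ltn // big_nat_cond big1 => [|j].
    have pk_gt1 : 1 < p ^ k by rewrite -(expn0 p) ltn_exp2l ?prime_gt1.
    by rewrite !mobius_pexp //= gtn_eqF // addr0 subrr.
  by rewrite mobius_pexp // => /andP[/andP[j_gt1 _] _]; case: j j_gt1 => [|[]].
rewrite big_divisorsM // muln_eq1 -mulnb PoszM -IHm -IHn big_distrlr /=.
apply: eq_big_seq => a; rewrite -dvdn_divisors // => dv_am.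
apply: eq_big_seq => b; rewrite -dvdn_divisors // => dv_bn.
rewrite mobiusM ?(dvdn_gt0 m_gt0 dv_am) ?(dvdn_gt0 n_gt0 dv_bn) //.
exact: coprime_dvdl dv_am (coprime_dvdr dv_bn co_mn).
Qed.

Lemma sum_unitary_divisors n : 0 < n ->
  \sum_(d <- divisors n) coprime d (n %/ d) = 2 ^ omega n.
Proof.
move: n; apply: coprime_ind => [|p k p_pr k_gt0|m n co_mn m_gt0 n_gt0 IHm IHn].
- by rewrite (_ : divisors 1 = [:: 1]) // big_seq1.
- have p_gt1 := prime_gt1 p_pr; have p_gt0 := ltnW p_gt1.
  rewrite big_divisors_pexp // omega_pexp // big_ltn // big_nat_recr //=.
  rewrite divn1 divnn expn_gt0 p_gt0 coprime1n coprimen1 big_nat_cond big1 // => j.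
  case/andP=> /andP[j_gt0 j_lt_k] _; rewrite -expnB 1?ltnW //.
  by rewrite coprime_pexpl // coprime_pexpr ?subn_gt0 // /coprime gcdnn gtn_eqF.
rewrite big_divisorsM // omegaM // expnD -IHm -IHn big_distrlr /=.
apply: eq_big_seq => a; rewrite -dvdn_divisors // => dv_am.
apply: eq_big_seq => b; rewrite -dvdn_divisors // => dv_bn.
have co_a_nb : coprime a (n %/ b).
  exact: coprime_dvdl dv_am (coprime_dvdr (dvdn_div dv_bn) co_mn).
have co_b_ma : coprime b (m %/ a).
  by rewrite coprime_sym (coprime_dvdl (dvdn_div dv_am)) // (coprime_dvdr dv_bn).
rewrite divnMA -divn_mulAC // -muln_divA // coprimeMl !coprimeMr co_a_nb co_b_ma.
by rewrite andbT andTb mulnb.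
Qed.

Section NatRangeBig.

Variables (R : Type) (idx : R).

Lemma big_divisors_nat (op : Monoid.com_law idx) (F : nat -> R) n : 0 < n ->
  \big[op/idx]_(d <- divisors n) F d = \big[op/idx]_(1 <= d < n.+1 | d %| n) F d.
Proof.
move=> n_gt0; rewrite -[RHS]big_filter; apply: perm_big; apply: uniq_perm => [||d].
- exact: divisors_uniq.
- by rewrite filter_uniq ?iota_uniq.
rewrite mem_filter mem_index_iota -dvdn_divisors // ltnS andb_idr // => dv_dn.
by rewrite (dvdn_gt0 n_gt0 dv_dn) dvdn_leq.
Qed.

Lemma big_nat_multiples (op : Monoid.law idx) (F : nat -> R) d N : 0 < d ->
  \big[op/idx]_(1 <= a < N.+1 | d %| a) F a =
  \big[op/idx]_(1 <= c < (N %/ d).+1) F (d * c).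
Proof.
move=> d_gt0; elim: N => [|N IHN]; first by rewrite div0n !big_geq.
rewrite big_mkcond big_nat_recr //= -big_mkcond IHN divnS //.
have [dv_dN | _] := boolP (d %| N.+1); last by rewrite Monoid.mulm1.
have def_q : N.+1 %/ d = (N %/ d).+1 by rewrite divnS // dv_dN.
by rewrite add1n [RHS]big_nat_recr //= -def_q mulnC divnK.
Qed.

Lemma big_divisors_pairs (op : Monoid.com_law idx) (F : nat -> nat -> R) n :
  \big[op/idx]_(1 <= i < n.+1) \big[op/idx]_(d <- divisors i) F d (i %/ d) =
  \big[op/idx]_(1 <= a < n.+1) \big[op/idx]_(1 <= b < n.+1 | a * b <= n) F a b.
Proof.
transitivity (\big[op/idx]_(1 <= i < n.+1) \big[op/idx]_(1 <= d < n.+1 | d %| i)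
                F d (i %/ d)).
  apply: eq_big_nat => i /andP[i_gt0 le_in].
  rewrite big_divisors_nat // (big_nat_widen _ _ _ _ _ le_in).
  apply: eq_bigl => d; apply: andb_idr => /dvdn_leq; rewrite ltnS; exact.
rewrite (exchange_big_dep_nat predT) //=; apply: eq_big_nat => a /andP[a_gt0 _].
rewrite big_nat_multiples //; under eq_bigr do rewrite mulKn //.
rewrite (big_nat_widen _ _ n.+1) ?ltnS ?leq_div //; apply: eq_bigl => b.
by rewrite ltnS leq_divRL // mulnC.
Qed.

Lemma big_nat_widen_idx (op : Monoid.law idx) (F : nat -> R) m n1 n2 :
  m <= n1 <= n2 -> (forall i, n1 <= i < n2 -> F i = idx) ->
  \big[op/idx]_(m <= i < n2) F i = \big[op/idx]_(m <= i < n1) F i.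
Proof.
case/andP=> le_mn1 le_n12 F_idx; rewrite (big_cat_nat le_mn1 le_n12) /=.
rewrite [X in op _ X]big_nat_cond [X in op _ X]big1 ?Monoid.mulm1 // => i.
by case/andP=> /F_idx.
Qed.

End NatRangeBig.

Lemma sum_sym_square m N (F : nat -> nat -> nat) : (forall a b, F a b = F b a) ->
  \sum_(m <= a < N) \sum_(m <= b < N) F a b =
  \sum_(m <= a < N) F a a + 2 * \sum_(m <= a < N) \sum_(a.+1 <= b < N) F a b.
Proof.
move=> F_sym; elim: N => [|N IHN]; first by rewrite !big_geq.
have [lt_Nm | le_mN] := ltnP N m; first by rewrite !big_geq.
have upper_split : \sum_(m <= a < N.+1) \sum_(a.+1 <= b < N.+1) F a b =
    \sum_(m <= a < N) \sum_(a.+1 <= b < N) F a b + \sum_(m <= a < N) F a N.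
  rewrite big_nat_recr //= (big_geq (leqnn N.+1)) addn0 -big_split.
  by apply: eq_big_nat => a /andP[_ lt_aN]; rewrite big_nat_recr.
rewrite upper_split [in RHS]big_nat_recr //= big_nat_recr //=.
under eq_bigr do rewrite big_nat_recr //=.
rewrite big_split /= big_nat_recr //= (eq_bigr _ (fun b _ => F_sym N b)) IHN.
lia.
Qed.

Definition coprime_pairs n :=
  \sum_(1 <= a < n.+1) \sum_(1 <= b < n.+1) ((a * b <= n) && coprime a b).

Definition coprime_partners n a :=
  \sum_(a.+1 <= b < n.+1) ((a * b <= n) && coprime a b).

Lemma sum_two_pow_omega n : \sum_(1 <= i < n.+1) 2 ^ omega i = coprime_pairs n.
Proof.
transitivity (\sum_(1 <= a < n.+1) \sum_(1 <= b < n.+1 | a * b <= n) coprime a b).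
  rewrite -big_divisors_pairs; apply: eq_big_nat => i /andP[i_gt0 _].
  by rewrite sum_unitary_divisors.
by apply: eq_bigr => a _; rewrite big_mkcond; apply: eq_bigr => b _; case: leqP.
Qed.

Lemma coprime_pairs_partners n : 0 < n ->
  coprime_pairs n = 1 + 2 * \sum_(1 <= a < n.+1) coprime_partners n a.
Proof.
move=> n_gt0; rewrite /coprime_pairs sum_sym_square => [|a b]; last first.
  by rewrite mulnC coprime_sym.
congr (_ + _); rewrite big_ltn // muln1 n_gt0 big_nat_cond big1 // => a.
by case/andP=> /andP[a_gt1 _] _; rewrite /coprime gcdnn gtn_eqF ?andbF.
Qed.

Lemma phi2_totient a : 0 < a -> phi2 a a = totient a.
Proof.
move=> a_gt0; rewrite /phi2 totient_count_coprime big_nat_recr //= [RHS]big_ltn //.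
rewrite /coprime gcdnn gcdn0 addnC; congr (_ + _).
by apply: eq_bigr => k _; rewrite gcdnC.
Qed.

Lemma phi2_div_partners n a : 0 < a -> a * a <= n ->
  phi2 (n %/ a) a = totient a + coprime_partners n a.
Proof.
move=> a_gt0 le_aa_n; have le_a_na : a <= n %/ a by rewrite leq_divRL.
rewrite /phi2 (@big_cat_nat _ _ _ a.+1) ?ltnS //= -/(phi2 a a) phi2_totient //.
congr (_ + _).
rewrite /coprime_partners (big_nat_widen _ _ n.+1) ?ltnS ?leq_div // big_mkcond /=.
by apply: eq_bigr => b _; rewrite ltnS leq_divRL // mulnC coprime_sym; case: leqP.
Qed.

Lemma coprime_partners_eq0 n a : 0 < a -> n <= a * a -> coprime_partners n a = 0.
Proof.
move=> a_gt0 le_n_aa; rewrite /coprime_partners big_nat_cond big1 // => b.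
case/andP=> /andP[lt_ab _] _.
have lt_n_ab : n < a * b by rewrite (leq_ltn_trans le_n_aa) // ltn_pmul2l.
by rewrite leqNgt lt_n_ab.
Qed.

Lemma coprime_partners1 n : coprime_partners n 1 = n.-1.
Proof.
rewrite /coprime_partners (eq_big_nat _ _ (F2 := fun=> 1)) => [|b /andP[_ le_bn]].
  by rewrite sum_nat_const_nat muln1 subSS subn1.
by rewrite mul1n -ltnS le_bn coprime1n.
Qed.

Lemma D2_widen M K : M <= K ->
  \sum_(1 <= a < K.+1) \sum_(1 <= b < K.+1) (a * b <= M) = D2 M.
Proof.
move=> le_MK; rewrite /D2 (@big_nat_widen_idx _ _ _ _ 1 M.+1) => [|//|a /andP[lt_Ma _]].
  apply: eq_big_nat => a /andP[a_gt0 _].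
  apply: big_nat_widen_idx => [//|b /andP[lt_Mb _]].
  by rewrite leqNgt (leq_trans lt_Mb) // leq_pmull.
rewrite big_nat_cond big1 // => b /andP[/andP[b_gt0 _] _].
by rewrite leqNgt (leq_trans lt_Ma) // leq_pmulr.
Qed.

Lemma D2_multiples n d : 0 < d ->
  \sum_(1 <= a < n.+1) \sum_(1 <= b < n.+1) [&& a * b <= n, d %| a & d %| b]
  = D2 (n %/ (d * d)).
Proof.
move=> d_gt0.
transitivity (\sum_(1 <= a < n.+1 | d %| a) \sum_(1 <= b < n.+1 | d %| b) (a * b <= n)).
  rewrite [RHS]big_mkcond; apply: eq_bigr => a _.
  case: (d %| a); last by rewrite big1 // => b _; rewrite andbF.
  rewrite [RHS]big_mkcond; apply: eq_bigr => b _.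
  by case: (d %| b); rewrite ?andbT ?andbF.
rewrite big_nat_multiples //; under eq_bigr do rewrite big_nat_multiples //.
rewrite -(@D2_widen _ (n %/ d)) ?divnMA ?leq_div //.
apply: eq_bigr => c _; apply: eq_bigr => e _.
by rewrite -divnMA leq_divRL ?muln_gt0 ?d_gt0 // mulnACA [c * e * _]mulnC.
Qed.

Local Open Scope ring_scope.

Lemma Posz_sum I r (P : pred I) (F : I -> nat) :
  (\sum_(i <- r | P i) F i)%N%:Z = \sum_(i <- r | P i) (F i)%:Z.
Proof. exact: (big_morph Posz PoszD). Qed.

Lemma coprime_pairs_phi2 n : (0 < n)%N ->
  (coprime_pairs n)%:Z = (2 * n - 1)%N%:Z
    + 2 * \sum_(2 <= i < n.+1 | (i * i < n)%N) ((phi2 (n %/ i) i)%:Z - (totient i)%:Z).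
Proof.
move=> n_gt0.
have -> : \sum_(2 <= i < n.+1 | (i * i < n)%N) ((phi2 (n %/ i) i)%:Z - (totient i)%:Z)
        = (\sum_(2 <= a < n.+1) coprime_partners n a)%N%:Z.
  rewrite Posz_sum big_mkcond; apply: eq_big_nat => a /andP[a_gt1 _].
  case: ltnP => [lt_aa_n | le_n_aa]; last by rewrite coprime_partners_eq0 // ltnW.
  by rewrite phi2_div_partners ?(ltnW a_gt1) ?(ltnW lt_aa_n) // PoszD addrC addKr.
rewrite coprime_pairs_partners // big_ltn // coprime_partners1; lia.
Qed.

Lemma coprime_mobius N a b : (0 < a <= N)%N ->
  (coprime a b)%:Z = \sum_(1 <= d < N.+1) ((d %| a) && (d %| b))%N%:Z * mobius d.
Proof.
case/andP=> a_gt0 le_aN; have g_gt0 : (0 < gcdn a b)%N by rewrite gcdn_gt0 a_gt0.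
have le_gN : (gcdn a b <= N)%N := leq_trans (dvdn_leq a_gt0 (dvdn_gcdl a b)) le_aN.
rewrite /coprime -sum_mobius_divisors // big_divisors_nat // (big_nat_widen _ _ N.+1) //.
rewrite big_mkcond; apply: eq_bigr => d _; rewrite -dvdn_gcd.
have [dv_dg | _] := boolP (d %| gcdn a b)%N; last by rewrite mul0r.
by rewrite ltnS (dvdn_leq g_gt0 dv_dg) mul1r.
Qed.

Lemma coprime_pairs_mobius n :
  (coprime_pairs n)%:Z
  = \sum_(1 <= i < n.+1 | (i * i <= n)%N) mobius i * (D2 (n %/ (i * i)))%:Z.
Proof.
transitivity (\sum_(1 <= d < n.+1) mobius d * (D2 (n %/ (d * d)))%:Z); last first.
  rewrite [RHS]big_mkcond; apply: eq_bigr => d _; case: leqP => // lt_n_dd.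
  by rewrite divn_small // /D2 big_geq // mulr0.
transitivity (\sum_(1 <= a < n.+1) \sum_(1 <= b < n.+1) \sum_(1 <= d < n.+1)
                ([&& a * b <= n, d %| a & d %| b])%N%:Z * mobius d).
  rewrite /coprime_pairs Posz_sum; apply: eq_big_nat => a /andP[a_gt0 lt_an].
  rewrite Posz_sum; apply: eq_bigr => b _.
  rewrite -mulnb PoszM (@coprime_mobius n) ?a_gt0 // mulr_sumr.
  by apply: eq_bigr => d _; rewrite mulrA -PoszM mulnb.
under eq_bigr do rewrite exchange_big /=.
rewrite exchange_big /=; apply: eq_big_nat => d /andP[d_gt0 _].
rewrite -D2_multiples // Posz_sum mulr_sumr; apply: eq_bigr => a _.
by rewrite Posz_sum mulr_sumr; apply: eq_bigr => b _; rewrite mulrC.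
Qed.

Theorem mainTheorem5 (n : nat) : (0 < n)%N ->
  ((\sum_(1 <= i < n.+1) 2 ^ omega i)%N%:Z
     = \sum_(1 <= i < n.+1 | (i * i <= n)%N) mobius i * (D2 (n %/ (i * i)))%:Z)
  /\
  ((\sum_(1 <= i < n.+1) 2 ^ omega i)%N%:Z
     = (2 * n - 1)%N%:Z
       + 2 * \sum_(2 <= i < n.+1 | (i * i < n)%N)
               ((phi2 (n %/ i) i)%:Z - (totient i)%:Z)).
Proof.
move=> n_gt0; rewrite sum_two_pow_omega.
by split; [exact: coprime_pairs_mobius | exact: coprime_pairs_phi2].
Qed.
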